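(* Let $c \in (0,1/2]$, $t_1 \in [0,1-2c]$, $t_2 \in [t_1+c,1-c]$, and $p,q \in (0,1)$ with $p\neq q$. Define $\Phi_1:\mathbb{R}\to\mathbb{R}\cup\{\infty\}$ by \[ \Phi_1(r) = \frac{t_2-t_1}{1-c}\,\frac{c(p-q)^2+(1-c)(p+q-2r)}{(1-c)+c(p+q-2r)}. \] Then: (1) $\Phi_1$ is a rational function of $r$ with one simple pole at $\frac{p+q}{2}+\frac{1-c}{2c}$, which lies strictly to the right of the interval $\Lambda_{p,q}$; (2) $\Phi_1$ has one root, at $\frac{p+q}{2}+\frac{c(p-q)^2}{2(1-c)}$, which lies strictly to the right of $\Lambda_{p,q}$ and strictly to the left of the pole; (3) $\Phi_1$ is differentiable at every $r\in\mathbb{R}$ other than the pole, with \[ \Phi_1'(r) = 2(t_2-t_1)\frac{c^2(p-q)^2-(1-c)^2}{(1-c)\big(1-c+c(p+q-2r)\big)^2} < 0, \] so $\Phi_1$ is strictly decreasing on $\Lambda_{p,q}$; (4) $\Phi_1$ is strictly positive on $\Lambda_{p,q}$.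
   Context: $\Lambda_{p,q}$ denotes the open interval $\{r\in\mathbb{R}: \max\{0,p+q-1\}<r<\min\{p,q\}\}$. *)

From Stdlib Require Export Reals Lra.
From Coquelicot Require Export Coquelicot.
Open Scope R_scope.

Definition Lambda (p q r : R) : Prop :=
  Rmax 0 (p + q - 1) < r < Rmin p q.

Definition Phi1_num (c p q r : R) : R :=
  c * (p - q)^2 + (1 - c) * (p + q - 2 * r).
Definition Phi1_den (c p q r : R) : R :=
  (1 - c) + c * (p + q - 2 * r).

(* Phi_1(r).  At the pole (den = 0) the value is Stdlib's junk r/0;
   the theorem only makes claims about Phi1 away from the pole. *)
Definition Phi1 (c t1 t2 p q r : R) : R :=
  (t2 - t1) / (1 - c) * (Phi1_num c p q r / Phi1_den c p q r).

(* Away from its pole, Phi_1 is the Moebius map r |-> M (r - root) / (r - pole)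
   with M = (t2 - t1) / c > 0, and root < pole because c |p - q| < 1 - c.
   Such a map is positive and strictly decreasing on (-oo, root), and Lambda_{p,q}
   lies left of root since every r in it is below min(p, q) <= (p + q) / 2. *)
From Stdlib Require Import Reals Lra.
From Coquelicot Require Import Coquelicot.
Open Scope R_scope.

Definition mobius (M a b r : R) : R := M * (r - a) / (r - b).

Lemma mobius_eq_0 M a b r : M <> 0 -> r <> b -> mobius M a b r = 0 <-> r = a.
Proof.
  intros HM Hrb; unfold mobius; split; intro h.
  - assert (h' : M * (r - a) = 0).
    { replace (M * (r - a)) with (M * (r - a) / (r - b) * (r - b)) by (field; lra).
      rewrite h; ring. }
    apply Rmult_integral in h' as [h' | h']; lra.
  - subst r; unfold Rdiv; ring.
Qed.

Section MobiusOrder.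

Variables (M a b : R).
Hypotheses (HM : 0 < M) (Hab : a < b).

Lemma mobius_pos r : r < a -> 0 < mobius M a b r.
Proof.
  intro Hr; unfold mobius, Rdiv.
  replace (M * (r - a) * / (r - b)) with (M * (a - r) * / (b - r)) by (field; lra).
  apply Rmult_lt_0_compat; [apply Rmult_lt_0_compat | apply Rinv_0_lt_compat]; lra.
Qed.

Lemma mobius_decreasing r s : r < s < b -> mobius M a b s < mobius M a b r.
Proof.
  intros Hrs; unfold mobius.
  replace (M * (s - a) / (s - b)) with (M - M * (b - a) * / (b - s)) by (field; lra).
  replace (M * (r - a) / (r - b)) with (M - M * (b - a) * / (b - r)) by (field; lra).
  assert (/ (b - r) < / (b - s)) by (apply Rinv_lt_contravar; nra).
  assert (0 < M * (b - a)) by nra.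
  nra.
Qed.

End MobiusOrder.

Lemma is_lim_Rinv_Rabs_sub a : is_lim (fun r => / Rabs (r - a)) a p_infty.
Proof.
  apply is_lim_Rinv_0_right.
  - replace (Finite 0) with (Finite (Rabs (a - a)))
      by (rewrite Rminus_eq_0, Rabs_R0; reflexivity).
    apply (is_lim_continuity (fun r => Rabs (r - a))); reg.
  - exists posreal_one; intros r _ Hr.
    apply Rabs_pos_lt; intro h; apply Hr; lra.
Qed.

Lemma is_lim_Rabs_mobius_pole M a b :
  M <> 0 -> a <> b -> is_lim (fun r => Rabs (mobius M a b r)) b p_infty.
Proof.
  intros HM Hab.
  assert (Hmul : is_Rbar_mult (Rabs (M * (b - a))) p_infty p_infty).
  { apply is_Rbar_mult_sym, is_Rbar_mult_p_infty_pos; simpl.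
    apply Rabs_pos_lt, Rmult_integral_contrapositive; split; lra. }
  rewrite <- (is_Rbar_mult_unique _ _ _ Hmul).
  apply is_lim_ext_loc with (fun r => Rabs (M * (r - a)) * / Rabs (r - b)).
  - exists posreal_one; intros r _ _.
    unfold mobius, Rdiv; rewrite (Rabs_mult (M * (r - a))), Rabs_inv; reflexivity.
  - apply is_lim_mult.
    + apply (is_lim_continuity (fun r => Rabs (M * (r - a)))); reg.
    + apply is_lim_Rinv_Rabs_sub.
    + exact (Rbar_mult_correct' _ _ _ Hmul).
Qed.

Lemma is_lim_mobius_residue M a b :
  is_lim (fun r => (r - b) * mobius M a b r) b (M * (b - a)).
Proof.
  apply is_lim_ext_loc with (fun r => M * (r - a)).
  - exists posreal_one; intros r _ Hr.
    unfold mobius; field; intro h; apply Hr; lra.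
  - apply (is_lim_continuity (fun r => M * (r - a))); reg.
Qed.

Definition Phi1_pole (c p q : R) : R := (p + q) / 2 + (1 - c) / (2 * c).
Definition Phi1_root (c p q : R) : R := (p + q) / 2 + c * (p - q)^2 / (2 * (1 - c)).
Definition Phi1_deriv (c t1 t2 p q r : R) : R :=
  2 * (t2 - t1) * (c^2 * (p - q)^2 - (1 - c)^2)
  / ((1 - c) * (1 - c + c * (p + q - 2 * r))^2).

Lemma Phi1_den_factor c p q r :
  c <> 0 -> Phi1_den c p q r = -2 * c * (r - Phi1_pole c p q).
Proof. intro Hc; unfold Phi1_den, Phi1_pole; field; exact Hc. Qed.

Lemma Phi1_num_factor c p q r :
  c <> 1 -> Phi1_num c p q r = -2 * (1 - c) * (r - Phi1_root c p q).
Proof. intro Hc; unfold Phi1_num, Phi1_root; field; lra. Qed.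

Lemma Phi1_den_eq_0 c p q r : c <> 0 -> Phi1_den c p q r = 0 <-> r = Phi1_pole c p q.
Proof.
  intro Hc; rewrite Phi1_den_factor by exact Hc; split; intro h.
  - apply Rmult_integral in h as [h | h]; lra.
  - subst r; ring.
Qed.

Lemma Phi1_num_eq_0 c p q r : c <> 1 -> Phi1_num c p q r = 0 <-> r = Phi1_root c p q.
Proof.
  intro Hc; rewrite Phi1_num_factor by exact Hc; split; intro h.
  - apply Rmult_integral in h as [h | h]; lra.
  - subst r; ring.
Qed.

Lemma Phi1_mobius c t1 t2 p q r :
  c <> 0 -> c <> 1 -> r <> Phi1_pole c p q ->
  Phi1 c t1 t2 p q r = mobius ((t2 - t1) / c) (Phi1_root c p q) (Phi1_pole c p q) r.
Proof.
  intros Hc0 Hc1 Hr; unfold Phi1, mobius.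
  rewrite Phi1_num_factor, Phi1_den_factor by assumption.
  field; repeat split; lra.
Qed.

Lemma scaled_sq_sub_lt c p q :
  0 < c <= 1 / 2 -> 0 < p < 1 -> 0 < q < 1 -> c^2 * (p - q)^2 < (1 - c)^2.
Proof.
  intros Hc Hp Hq.
  assert ((p - q)^2 < 1) by nra.
  assert (c^2 <= (1 - c)^2) by nra.
  assert (0 < c^2) by nra.
  nra.
Qed.

Lemma Phi1_root_sub_pole c p q :
  c <> 0 -> c <> 1 ->
  Phi1_root c p q - Phi1_pole c p q = (c^2 * (p - q)^2 - (1 - c)^2) / (2 * c * (1 - c)).
Proof. intros Hc0 Hc1; unfold Phi1_root, Phi1_pole; field; lra. Qed.

Lemma Phi1_root_lt_pole c p q :
  0 < c <= 1 / 2 -> 0 < p < 1 -> 0 < q < 1 -> Phi1_root c p q < Phi1_pole c p q.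
Proof.
  intros Hc Hp Hq.
  assert (Hdiff := Phi1_root_sub_pole c p q ltac:(lra) ltac:(lra)).
  assert (Hneg : (c^2 * (p - q)^2 - (1 - c)^2) / (2 * c * (1 - c)) < 0).
  { apply Rdiv_neg_pos; [pose proof (scaled_sq_sub_lt c p q Hc Hp Hq) |]; nra. }
  lra.
Qed.

Lemma Lambda_lt_Phi1_root c p q r : 0 <= c < 1 -> Lambda p q r -> r < Phi1_root c p q.
Proof.
  intros Hc [_ Hr]; unfold Phi1_root.
  assert (0 <= c * (p - q)^2 / (2 * (1 - c))).
  { apply Rdiv_le_0_compat; [apply Rmult_le_pos; [lra | apply pow2_ge_0] | lra]. }
  pose proof (Rmin_l p q); pose proof (Rmin_r p q).
  lra.
Qed.

Lemma is_derive_Phi1 c t1 t2 p q r :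
  c <> 1 -> Phi1_den c p q r <> 0 ->
  derivable_pt_lim (Phi1 c t1 t2 p q) r (Phi1_deriv c t1 t2 p q r).
Proof.
  intros Hc Hden; apply is_derive_Reals.
  unfold Phi1, Phi1_num, Phi1_den, Phi1_deriv; unfold Phi1_den in Hden.
  auto_derive; [exact Hden |].
  field; split; [exact Hden | lra].
Qed.

Lemma Phi1_deriv_lt_0 c t1 t2 p q r :
  0 < c <= 1 / 2 -> t1 < t2 -> 0 < p < 1 -> 0 < q < 1 ->
  Phi1_den c p q r <> 0 -> Phi1_deriv c t1 t2 p q r < 0.
Proof.
  intros Hc Ht Hp Hq Hden; unfold Phi1_deriv; unfold Phi1_den in Hden.
  pose proof (scaled_sq_sub_lt c p q Hc Hp Hq).
  apply Rdiv_neg_pos; [nra |].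
  apply Rmult_lt_0_compat; [lra | apply pow2_gt_0; exact Hden].
Qed.

Theorem proposition2p2 (c t1 t2 p q : R) :
  0 < c <= 1 / 2 ->
  0 <= t1 <= 1 - 2 * c ->
  t1 + c <= t2 <= 1 - c ->
  0 < p < 1 -> 0 < q < 1 -> p <> q ->
  let pole := (p + q) / 2 + (1 - c) / (2 * c) in
  let root := (p + q) / 2 + c * (p - q)^2 / (2 * (1 - c)) in
  (* (1) one simple pole at [pole], strictly to the right of Lambda *)
  ((forall r, Phi1_den c p q r = 0 <-> r = pole) /\
   Phi1_num c p q pole <> 0 /\
   is_lim (fun r => Rabs (Phi1 c t1 t2 p q r)) pole p_infty /\
   (exists L, L <> 0 /\ is_lim (fun r => (r - pole) * Phi1 c t1 t2 p q r) pole L) /\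
   (forall r, Lambda p q r -> r < pole)) /\
  (* (2) exactly one root, at [root], right of Lambda and left of the pole *)
  ((forall r, r <> pole -> (Phi1 c t1 t2 p q r = 0 <-> r = root)) /\
   (forall r, Lambda p q r -> r < root) /\
   root < pole) /\
  (* (3) derivative formula away from the pole, negativity, monotonicity *)
  ((forall r, r <> pole ->
      derivable_pt_lim (Phi1 c t1 t2 p q) r
        (2 * (t2 - t1) * (c^2 * (p - q)^2 - (1 - c)^2)
         / ((1 - c) * (1 - c + c * (p + q - 2 * r))^2)) /\
      2 * (t2 - t1) * (c^2 * (p - q)^2 - (1 - c)^2)
         / ((1 - c) * (1 - c + c * (p + q - 2 * r))^2) < 0) /\
   (forall r s, Lambda p q r -> Lambda p q s -> r < s ->
      Phi1 c t1 t2 p q s < Phi1 c t1 t2 p q r)) /\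
  (* (4) strictly positive on Lambda *)
  (forall r, Lambda p q r -> 0 < Phi1 c t1 t2 p q r).
Proof.
  intros Hc Ht1 Ht2 Hp Hq _ pole root.
  assert (Hc0 : c <> 0) by lra; assert (Hc1 : c <> 1) by lra.
  set (M := (t2 - t1) / c).
  assert (HM : 0 < M) by (apply Rdiv_lt_0_compat; lra).
  assert (Hrp : root < pole) by exact (Phi1_root_lt_pole c p q Hc Hp Hq).
  assert (HL : forall r, Lambda p q r -> r < root)
    by (intros r; apply Lambda_lt_Phi1_root; lra).
  assert (Hmob : forall r, r <> pole -> Phi1 c t1 t2 p q r = mobius M root pole r)
    by (intros r; apply Phi1_mobius; assumption).
  assert (Hnear_lim : forall (F : R -> R -> R) l,
            is_lim (fun r => F r (mobius M root pole r)) pole l ->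
            is_lim (fun r => F r (Phi1 c t1 t2 p q r)) pole l).
  { intros F l; apply is_lim_ext_loc.
    exists posreal_one; intros r _ Hr; rewrite (Hmob r Hr); reflexivity. }
  assert (Hden : forall r, r <> pole -> Phi1_den c p q r <> 0)
    by (intros r Hr h; apply Hr, Phi1_den_eq_0; assumption).
  refine (conj (conj _ (conj _ (conj _ (conj _ _))))
                (conj (conj _ (conj _ _)) (conj (conj _ _) _))).
  - intro r; apply Phi1_den_eq_0, Hc0.
  - intro h; apply Phi1_num_eq_0 in h; [change (pole = root) in h; lra | exact Hc1].
  - apply (Hnear_lim (fun _ y => Rabs y)), is_lim_Rabs_mobius_pole; lra.
  - exists (M * (pole - root)); split; [nra |].
    apply (Hnear_lim (fun r y => (r - pole) * y)), is_lim_mobius_residue.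
  - intros r Hr; pose proof (HL r Hr); lra.
  - intros r Hr; rewrite Hmob by exact Hr; apply mobius_eq_0; lra.
  - exact HL.
  - exact Hrp.
  - intros r Hr; split.
    + apply is_derive_Phi1; [exact Hc1 | apply Hden, Hr].
    + apply Phi1_deriv_lt_0; [exact Hc | lra | exact Hp | exact Hq | apply Hden, Hr].
  - intros r s Hr Hs Hrs; pose proof (HL r Hr); pose proof (HL s Hs).
    rewrite !Hmob by lra; apply mobius_decreasing; lra.
  - intros r Hr; pose proof (HL r Hr).
    rewrite Hmob by lra; apply mobius_pos; lra.
Qed.
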